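(* Let $M$ be an $m$-dimensional manifold and $C$ a compact subset of $M$. Let $f:\mathbb{R}^n\times M\to\mathbb{R}$ be $C^\infty$, let $x_0\in C$, and define $g:M\to\mathbb{R}$ by $g(x)=f(0,x)$. Assume that $g|_C$ attains an absolute minimum at $x_0$ and that $x_0$ is the only point of $C$ where this minimum is attained; that $g$ has a critical point at $x_0$ with positive definite Hessian there; and that there exists $\zeta>0$ such that for all $p\in\mathbb{R}^n$ with $|p|<\zeta$ the function $M\to\mathbb{R}$, $x\mapsto f(p,x)$, has a critical point at $x_0$. Then there exists $\epsilon>0$ such that for all $p\in\mathbb{R}^n$ with $|p|<\epsilon$, the function $C\to\mathbb{R}$, $x\mapsto f(p,x)$, attains an absolute minimum at $x_0$. *)

From HB Require Import structures.
From mathcomp Require Import all_boot all_order all_algebra.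
From mathcomp Require Import all_classical all_reals all_analysis.
Set Implicit Arguments. Unset Strict Implicit. Unset Printing Implicit Defensive.
Import Order.TTheory GRing.Theory Num.Theory.
Import numFieldNormedType.Exports.
Local Open Scope classical_set_scope.
Local Open Scope ring_scope.

Fixpoint Ck_on (R : realType) (V W : normedModType R) (k : nat)
    (U : set V) (f : V -> W) : Prop :=
  match k with
  | 0%N => forall x, U x -> {for x, continuous f}
  | k'.+1 => (forall x, U x -> {for x, continuous f}) /\
             forall v : V, (forall x, U x -> derivable f x v) /\
                           Ck_on k' U (fun x => 'D_v f x)
  end.

Definition smooth_on (R : realType) (V W : normedModType R)
    (U : set V) (f : V -> W) : Prop := forall k, Ck_on k U f.

Record chart (R : realType) (M : Type) (m : nat) := Chart {
  ch_dom : set M;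
  ch_fun : M -> 'rV[R]_m;
  ch_inv : 'rV[R]_m -> M;
  ch_img : set 'rV[R]_m }.

Definition is_chart (R : realType) (M : topologicalType) (m : nat)
    (c : chart R M m) : Prop :=
  [/\ open (ch_dom c) /\ open (ch_img c),
      (forall x, ch_dom c x -> ch_img c (ch_fun c x) /\ ch_inv c (ch_fun c x) = x),
      (forall y, ch_img c y -> ch_dom c (ch_inv c y) /\ ch_fun c (ch_inv c y) = y),
      (forall x, ch_dom c x -> {for x, continuous (ch_fun c)}) &
      (forall y, ch_img c y -> {for y, continuous (ch_inv c)})].

Definition smooth_manifold (R : realType) (M : topologicalType) (m : nat)
    (A : set (chart R M m)) : Prop :=
  [/\ hausdorff_space M, @second_countable M,
      (forall c, A c -> is_chart c),
      (forall x : M, exists c, A c /\ ch_dom c x) &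
      (forall c d, A c -> A d ->
         smooth_on [set y | ch_img c y /\ ch_dom d (ch_inv c y)]
                   (fun y => ch_fun d (ch_inv c y)))].

(* f : R^n x M -> R is C^oo (read through charts; the pair (p, y) is
   encoded as the row vector z = (p | y) in 'rV_(n + m)). *)
Definition smooth_param (R : realType) (M : topologicalType) (n m : nat)
    (A : set (chart R M m)) (f : 'rV[R]_n -> M -> R) : Prop :=
  forall c, A c ->
    smooth_on [set z : 'rV[R]_(n + m) | ch_img c (rsubmx z)]
              (fun z => f (lsubmx z) (ch_inv c (rsubmx z))).

Definition critical_point (R : realType) (M : topologicalType) (m : nat)
    (A : set (chart R M m)) (h : M -> R) (x0 : M) : Prop :=
  forall c, A c -> ch_dom c x0 ->
    forall v : 'rV[R]_m, 'D_v (fun y => h (ch_inv c y)) (ch_fun c x0) = 0.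

Definition pos_def_hessian (R : realType) (M : topologicalType) (m : nat)
    (A : set (chart R M m)) (h : M -> R) (x0 : M) : Prop :=
  forall c, A c -> ch_dom c x0 ->
    forall v : 'rV[R]_m, v != 0 ->
      0 < 'D_v (fun y => 'D_v (fun y' => h (ch_inv c y')) y) (ch_fun c x0).

From HB Require Import structures.
From mathcomp Require Import all_boot all_order all_algebra.
From mathcomp Require Import all_classical all_reals all_analysis.
From mathcomp Require Import ring lra.

Set Implicit Arguments.
Unset Strict Implicit.
Unset Printing Implicit Defensive.

Import Order.TTheory GRing.Theory Num.Theory.
Import numFieldNormedType.Exports.
Local Open Scope classical_set_scope.
Local Open Scope ring_scope.

(* Work in a chart around x0 and pack the parameter and the chart coordinate
   into one row vector (p | y).  The Hessian in y is positive definite at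
   (0 | y0) and the second derivatives are continuous, so it stays positive
   semidefinite on a ball around (0 | y0).  On that ball y |-> f(p, y) is
   convex along every segment starting at y0, and y0 is a critical point of
   f(p, .) for small p, hence a minimum there.  Outside the chart ball
   f(0, .) exceeds f(0, x0) on the compact set C, and joint continuity of f
   plus compactness keeps f(p, .) above f(p, x0) there for small p. *)

Section matrix_norm.
Variable R : realType.

Lemma mx_norm_ltP p q (x : 'M[R]_(p, q)) e :
  `|x| < e <-> 0 < e /\ forall i j, `|x i j| < e.
Proof.
have := @mx_norm_ball R p q; move/(congr1 (fun B => B 0 e x)).
rewrite /ball_ /= sub0r normrN => <-.
by split=> -[e0 xe]; split=> // i j; move: (xe i j); rewrite /ball /= mxE sub0r normrN.
Qed.

Lemma mx_entry_norm_le p q (x : 'M[R]_(p, q)) i j : `|x i j| <= `|x|.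
Proof. by rewrite leNgt; apply/negP => /mx_norm_ltP[_ /(_ i j)]; rewrite ltxx. Qed.

Lemma norm_row_mx_lt k l (a : 'rV[R]_k) (b : 'rV[R]_l) e :
  `|a| < e -> `|b| < e -> `|row_mx a b| < e.
Proof.
move=> /mx_norm_ltP[e0 ae] /mx_norm_ltP[_ be]; apply/mx_norm_ltP; split=> // i j.
by rewrite mxE; case: splitP.
Qed.

End matrix_norm.

Section directional_derivative.
Variable R : realType.

Lemma Ck_on_continuous (V W : normedModType R) k (U : set V) (f : V -> W) x :
  Ck_on k U f -> U x -> {for x, continuous f}.
Proof. by case: k => [|k] /=; [exact | case=> + _; exact]. Qed.

Lemma Ck_on_derivable (V W : normedModType R) k (U : set V) (f : V -> W) x v :
  Ck_on k.+1 U f -> U x -> derivable f x v.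
Proof. by case=> _ /(_ v) [+ _]; exact. Qed.

Lemma Ck_on_derive (V W : normedModType R) k (U : set V) (f : V -> W) v :
  Ck_on k.+1 U f -> Ck_on k U ('D_v f).
Proof. by case=> _ /(_ v) []. Qed.

Section line.
Variables (V W : normedModType R) (f : V -> W) (w v : V) (t : R).

Let line_quotientE :
  (fun h : R => h^-1 *: (((fun s : R => f (w + s *: v)) \o shift t) (h *: 1)
                         - f (w + t *: v))) =
  (fun h : R => h^-1 *: ((f \o shift (w + t *: v)) (h *: v) - f (w + t *: v))).
Proof.
apply: funext => h /=; congr (_ *: (f _ - _)).
by rewrite /shift /= scaler1 scalerDl addrCA addrC.
Qed.

Lemma derive_line : 'D_1 (fun s : R => f (w + s *: v)) t = 'D_v f (w + t *: v).
Proof. by rewrite /derive line_quotientE. Qed.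

Lemma derivable_line :
  derivable (fun s : R => f (w + s *: v)) t 1 <-> derivable f (w + t *: v) v.
Proof. by rewrite /derivable line_quotientE. Qed.

Lemma is_derive_line : derivable f (w + t *: v) v ->
  is_derive t 1 (fun s : R => f (w + s *: v)) ('D_v f (w + t *: v)).
Proof. by move=> fd; apply: DeriveDef; [exact/derivable_line | exact: derive_line]. Qed.

End line.

Lemma derive_row_mx0 (W : normedModType R) k l (f : 'rV[R]_(k + l) -> W) p y v :
  'D_(row_mx 0 v) f (row_mx p y) = 'D_v (fun y' => f (row_mx p y')) y.
Proof.
rewrite /derive; do 2 f_equal; apply: funext => h /=.
by rewrite /shift /= scale_row_mx scaler0 add_row_mx add0r.
Qed.

Lemma is_deriveZ_dir (V : normedModType R) (f : V -> R) x v (c : R) :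
  derivable f x v -> is_derive x (c *: v) f (c * 'D_v f x).
Proof.
move=> fd; pose line s := f (x + s *: v).
have line_d : derivable line (c *: 0) 1.
  by apply/derivable_line; rewrite scaler0 scale0r addr0.
have scale_d : derivable ( *:%R c) (0 : R) 1 by apply/derivable1_diffP; exact: ex_diff.
have lineZE : (fun s : R => f (x + s *: (c *: v))) = line \o ( *:%R c).
  by apply: funext => s; rewrite /line /= scalerA mulrC.
have lineZ_d : derivable (line \o ( *:%R c)) 0 1.
  by apply/derivable1_diffP/differentiable_comp; exact/derivable1_diffP.
apply: DeriveDef; first by move: lineZ_d; rewrite -lineZE derivable_line scale0r addr0.
have -> : 'D_(c *: v) f x = 'D_1 (fun s : R => f (x + s *: (c *: v))) 0.
  by rewrite derive_line scale0r addr0.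
rewrite lineZE -derive1E (derive1_comp scale_d line_d) !derive1E derive_line.
rewrite scaler0 scale0r addr0 mulrC; congr (_ * _).
by rewrite deriveE // diff_val; exact: mulr1.
Qed.

Lemma derivableZ_dir (V : normedModType R) (f : V -> R) x v (c : R) :
  derivable f x v -> derivable f x (c *: v).
Proof. by move=> /(is_deriveZ_dir c) []. Qed.

Lemma deriveZ_dir (V : normedModType R) (f : V -> R) x v (c : R) :
  derivable f x v -> 'D_(c *: v) f x = c * 'D_v f x.
Proof. by move=> /(is_deriveZ_dir c) []. Qed.

Lemma MVT01 (f df : R -> R) :
  (forall t : R, 0 <= t <= 1 -> is_derive t 1 f (df t)) ->
  forall t : R, 0 <= t <= 1 -> exists2 c : R, 0 <= c <= t & f t - f 0 = df c * t.
Proof.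
move=> fd t /andP[t0 t1].
have in01 s : s \in `[0, t] -> 0 <= s <= 1.
  by rewrite in_itv /= => /andP[s0 st]; rewrite s0 (le_trans st).
have fc : {within `[0, t], continuous f}.
  apply: continuous_in_subspaceT => s /[1!inE] /in01 /fd fsd.
  exact/differentiable_continuous/derivable1_diffP.
have [c] := MVT_segment t0 (fun s s0t => fd s (in01 s (subset_itv_oo_cc s0t))) fc.
by rewrite in_itv subr0 => c0t ->; exists c.
Qed.

Lemma MVT_line (V : normedModType R) (f : V -> R) w v :
  (forall t : R, 0 <= t <= 1 -> derivable f (w + t *: v) v) ->
  exists2 t : R, 0 <= t <= 1 & f (w + v) - f w = 'D_v f (w + t *: v).
Proof.
move=> fd.
have [|t /andP[t0 t1]] := MVT01 (f := fun s => f (w + s *: v))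
  (df := fun s => 'D_v f (w + s *: v)) (t := 1) (fun t tI => is_derive_line (fd t tI)).
  by rewrite ler01 lexx.
by rewrite scale1r scale0r addr0 mulr1 => E; exists t; rewrite ?t0.
Qed.

Lemma le_critical_segment (V : normedModType R) (G : V -> R) (a v : V) :
  (forall t : R, 0 <= t <= 1 -> derivable G (a + t *: v) v) ->
  (forall t : R, 0 <= t <= 1 -> derivable ('D_v G) (a + t *: v) v) ->
  (forall t : R, 0 <= t <= 1 -> 0 <= 'D_v ('D_v G) (a + t *: v)) ->
  'D_v G a = 0 -> G a <= G (a + v).
Proof.
move=> Gd DGd D2G_ge0 crit.
have [c /andP[c0 c1] /eqP] := MVT_line Gd.
rewrite subr_eq => /eqP ->; rewrite lerDr.
have [|c' /andP[c'0 c'c]] := MVT01 (f := fun s => 'D_v G (a + s *: v))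
  (df := fun s => 'D_v ('D_v G) (a + s *: v)) (t := c)
  (fun t tI => is_derive_line (DGd t tI)).
  by rewrite c0 c1.
rewrite scale0r addr0 crit subr0 => ->; apply: mulr_ge0 => //.
by apply: D2G_ge0; rewrite c'0 (le_trans c'c).
Qed.

(* By the mean value theorem along [v], the quotient equals [a] times
   ['D_v f] at a point within [O(|h|)] of [z]. *)
Lemma cvg_dir_increment (V : normedModType R) (f : V -> R) z u v (a : R) :
  (\forall y \near z, derivable f y v) -> {for z, continuous ('D_v f)} ->
  (fun h : R => h^-1 *: (f (h *: u + z + (h * a) *: v) - f (h *: u + z))) @ 0^'
    --> a * 'D_v f z.
Proof.
move=> fdv Dfc; apply/cvgrPdist_le => e e0.
pose eta := e / (`|a| + 1).
have eta0 : 0 < eta by rewrite divr_gt0 // ltr_pwDr.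
have near_z : \forall y \near z, derivable f y v /\ `|'D_v f z - 'D_v f y| < eta.
  by near=> y; split; [near: y | near: y; exact: (cvgrPdist_lt _ _).1 Dfc _ eta0].
have [rho rho0 z_ball] := (nbhs_ballP _ _).1 near_z.
pose N := `|u| + `|a| * `|v| + 1.
have N0 : 0 < N by rewrite ltr_pwDr // addr_ge0 // mulr_ge0.
near=> h.
have h0 : h != 0 by near: h; exact: nbhs_dnbhs_neq.
have hN : `|h| * N < rho.
  by rewrite -ltr_pdivlMr //; near: h; apply: dnbhs0_lt; rewrite divr_gt0.
have segment_ball t : 0 <= t <= 1 -> ball z rho (h *: u + z + t *: ((h * a) *: v)).
  move=> /andP[t0 t1]; rewrite -ball_normE /ball_ /= scalerA [h *: u + z]addrC -addrA.
  rewrite opprD addNKr normrN (le_lt_trans (ler_normD _ _)) // (le_lt_trans _ hN) //.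
  rewrite !normrZ /N mulrDr mulrDr mulr1 -addrA lerD2l (ger0_norm t0) -!mulrA.
  by rewrite (le_trans (ler_piMl _ t1)) ?lerDl.
have [t t01 ->] := MVT_line (w := h *: u + z) (v := (h * a) *: v)
  (fun t t01 => derivableZ_dir (z_ball _ (segment_ball t t01)).1).
have [fd_t Df_close] := z_ball _ (segment_ball t t01).
rewrite deriveZ_dir // /GRing.scale /= !mulrA mulVf // mul1r -mulrBr normrM.
apply: le_trans (ler_wpM2l (normr_ge0 _) (ltW Df_close)) _.
by rewrite /eta mulrA ler_pdivrMr ?ltr_pwDr // mulrC ler_pM2l // lerDl.
Unshelve. all: end_near. Qed.

Lemma is_deriveDZ_dir (V : normedModType R) (f : V -> R) z u v (a du : R) :
  is_derive z u f du -> (\forall y \near z, derivable f y v) ->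
  {for z, continuous ('D_v f)} -> is_derive z (u + a *: v) f (du + a * 'D_v f z).
Proof.
case=> fdu <- {du} fdv Dfc.
pose q_u h := h^-1 *: ((f \o shift z) (h *: u) - f z).
pose r h := h^-1 *: (f (h *: u + z + (h * a) *: v) - f (h *: u + z)).
have quotientE :
    (fun h : R => h^-1 *: ((f \o shift z) (h *: (u + a *: v)) - f z)) = q_u + r.
  apply: funext => h; rewrite -[(q_u + r) h]/(q_u h + r h) /q_u /r /shift /=.
  rewrite -scalerDr (scalerDr h u) scalerA [_ + z]addrAC; congr (_ *: _); ring.
have q_cvg : (fun h : R => h^-1 *: ((f \o shift z) (h *: (u + a *: v)) - f z)) @ 0^'
    --> 'D_u f z + a * 'D_v f z.
  by rewrite quotientE; apply: cvgD => //; exact: cvg_dir_increment.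
by apply: DeriveDef; [exact: cvgP q_cvg | exact: cvg_lim q_cvg].
Qed.

Lemma is_derive_sum_dir (V : normedModType R) (f : V -> R) z k
    (w : 'I_k -> V) (c : 'I_k -> R) :
  (forall i, \forall y \near z, derivable f y (w i)) ->
  (forall i, {for z, continuous ('D_(w i) f)}) ->
  is_derive z (\sum_i c i *: w i) f (\sum_i c i * 'D_(w i) f z).
Proof.
move=> fd Dfc; elim/big_rec2: _ => [|i v dv _ IH]; first exact: is_derive0.
by rewrite addrC [X in is_derive _ _ _ X]addrC; exact: is_deriveDZ_dir.
Qed.

End directional_derivative.

Section quadratic_form.
Variable R : realType.

Lemma continuous_sum (T : topologicalType) (V : normedModType R) (I : Type)
    (s : seq I) (F : I -> T -> V) :
  (forall i, continuous (F i)) -> continuous (fun x => \sum_(i <- s) F i x).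
Proof.
move=> Fc; rewrite -(@fct_sumE _ _ _ _ _ F); elim/big_ind: _ => //.
- exact: cst_continuous.
- by move=> f g fc gc x; exact: (continuousD (fc x) (gc x)).
Qed.

Definition qform k (Q : 'I_k -> 'I_k -> R) (v : 'rV[R]_k) : R :=
  \sum_j v 0 j * \sum_i v 0 i * Q i j.

Lemma qformZ k (Q : 'I_k -> 'I_k -> R) a v : qform Q (a *: v) = a ^+ 2 * qform Q v.
Proof.
rewrite /qform mulr_sumr; apply: eq_bigr => j _; rewrite mxE.
under eq_bigr do rewrite mxE -mulrA.
by rewrite -mulr_sumr; ring.
Qed.

Lemma qform0 k (Q : 'I_k -> 'I_k -> R) : qform Q 0 = 0.
Proof. by rewrite /qform big1 // => j _; rewrite mxE mul0r. Qed.

Lemma qformB k (Q Q' : 'I_k -> 'I_k -> R) v :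
  qform Q v - qform Q' v = qform (fun i j => Q i j - Q' i j) v.
Proof.
rewrite /qform -sumrB; apply: eq_bigr => j _; rewrite -mulrBr -sumrB.
by congr (_ * _); apply: eq_bigr => i _; rewrite mulrBr.
Qed.

Lemma qform_continuous k (Q : 'I_k -> 'I_k -> R) : continuous (qform Q).
Proof.
apply: continuous_sum => j v; apply: continuousM; first exact: coord_continuous.
apply: continuous_sum => i w; apply: continuousM; first exact: coord_continuous.
exact: cst_continuous.
Qed.

Lemma qform_norm_le k (Q : 'I_k -> 'I_k -> R) v eta :
  `|v| <= 1 -> (forall i j, `|Q i j| <= eta) -> `|qform Q v| <= eta *+ (k * k).
Proof.
move=> v1 Qeta; have v_entry i : `|v 0 i| <= 1 := le_trans (mx_entry_norm_le v 0 i) v1.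
have -> : eta *+ (k * k) = \sum_(j < k) \sum_(i < k) eta.
  by rewrite !sumr_const card_ord mulrnA.
apply: le_trans (ler_norm_sum _ _ _) _; apply: ler_sum => j _.
rewrite normrM -[X in _ <= X]mul1r; apply: ler_pM => //.
apply: le_trans (ler_norm_sum _ _ _) _; apply: ler_sum => i _.
by rewrite normrM -[X in _ <= X]mul1r ler_pM.
Qed.

Lemma qform_sphere_lb k (Q : 'I_k -> 'I_k -> R) :
  (forall v, v != 0 -> 0 < qform Q v) ->
  exists2 c : R, 0 < c & forall u, `|u| = 1 -> c <= qform Q u.
Proof.
move=> Qpos; pose S := [set u : 'rV[R]_k | `|u| = 1].
have [S0|S0] := pselect (S !=set0); last first.
  by exists 1 => // u u1; exfalso; apply: S0; exists u.
have cS : compact S.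
  apply: bounded_closed_compact.
    by rewrite /= /bounded_near; near=> M => u /= ->; near: M; exact: nbhs_pinfty_ge.
  rewrite (_ : S = (fun u => `|u|) @^-1` [set 1]) //.
  apply: preimage_closed; last exact: closed_eq.
  by move=> u _; exact: norm_continuous.
have [u0 /[1!inE] u01 u0_min] :=
  EVT_min_rV S0 cS (continuous_subspaceT (qform_continuous (Q := Q))).
exists (qform Q u0) => [|u u1]; last by apply: u0_min; rewrite inE.
by apply: Qpos; rewrite -normr_eq0 u01 oner_eq0.
Unshelve. all: end_near. Qed.

(* The form is at least [c > 0] on the unit sphere, so entries within
   [c / (k * k + 1)] of those at [z0] keep it positive there; homogeneity
   extends nonnegativity to all [v]. *)
Lemma qform_ge0_near (T : topologicalType) k (Q : 'I_k -> 'I_k -> T -> R) z0 :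
  (forall i j, {for z0, continuous (Q i j)}) ->
  (forall v, v != 0 -> 0 < qform (fun i j => Q i j z0) v) ->
  \forall z \near z0, forall v, 0 <= qform (fun i j => Q i j z) v.
Proof.
move=> Qc Qpos; have [c c0 c_le] := qform_sphere_lb Qpos.
pose eta := c / (k * k).+1%:R.
have eta0 : 0 < eta by rewrite divr_gt0.
have eta_small : eta *+ (k * k) < c.
  by rewrite -mulr_natr /eta -mulrA gtr_pMr // mulrC ltr_pdivrMr // mul1r ltr_nat.
have Q_close : \forall z \near z0, forall i j, `|Q i j z0 - Q i j z| < eta.
  apply: filter_forall => i; apply: filter_forall => j.
  exact: (cvgrPdist_lt _ _).1 (Qc i j) _ eta0.
apply: filterS Q_close => z Q_z v.
have [->|v0] := eqVneq v 0; first by rewrite qform0.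
have v_scale : v = `|v| *: (`|v|^-1 *: v) by rewrite scalerA mulfV ?scale1r ?normr_eq0.
rewrite v_scale qformZ mulr_ge0 ?sqr_ge0 //; set u := `|v|^-1 *: v.
have u1 : `|u| = 1 by rewrite normrZ ger0_norm ?invr_ge0 // mulVf ?normr_eq0.
have u_le1 : `|u| <= 1 by rewrite u1.
have := qform_norm_le u_le1 (fun i j => ltW (Q_z i j)).
rewrite -qformB => /ler_normlW; have := c_le _ u1; lra.
Qed.

End quadratic_form.

Section local_minimum.
Variable R : realType.

Lemma derive2_sum_dir (V : normedModType R) (G : V -> R) (U : set V) k
    (w : 'I_k -> V) (c : 'rV[R]_k) z :
  open U -> Ck_on 2 U G -> U z ->
  'D_(\sum_i c 0 i *: w i) ('D_(\sum_i c 0 i *: w i) G) z =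
    qform (fun i j => 'D_(w i) ('D_(w j) G) z) c.
Proof.
move=> oU G2 Uz; set v := \sum_i _.
have near_U y : U y -> \forall y' \near y, U y' by move=> Uy; exact: open_nbhs_nbhs.
have DG1 e : Ck_on 1 U ('D_e G) := Ck_on_derive e G2.
have DvG_near : \forall y \near z, 'D_v G y = \sum_j c 0 j * 'D_(w j) G y.
  near=> y; have Uy : U y by near: y; exact: near_U.
  apply: derive_val; apply: is_derive_sum_dir => i.
    by apply: filterS (near_U y Uy) => y' Uy'; exact: Ck_on_derivable G2 Uy'.
  exact: Ck_on_continuous (DG1 _) Uy.
rewrite (near_eq_derive _ DvG_near).
have -> : (fun y => \sum_j c 0 j * 'D_(w j) G y) = \sum_j (c 0 j \*: 'D_(w j) G).
  by apply: funext => y; rewrite fct_sumE.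
rewrite derive_sum => [|j]; last exact/derivableZ/(Ck_on_derivable (DG1 _) Uz).
apply: eq_bigr => j _; rewrite deriveZ; last exact: Ck_on_derivable (DG1 _) Uz.
congr (_ * _); apply: derive_val; apply: is_derive_sum_dir => i.
  by apply: filterS (near_U z Uz) => y' Uy'; exact: Ck_on_derivable (DG1 _) Uy'.
exact: Ck_on_continuous (Ck_on_derive _ (DG1 _)) Uz.
Unshelve. all: end_near. Qed.

Lemma row_mx0_sum_delta n m (v : 'rV[R]_m) :
  row_mx (0 : 'rV[R]_n) v = \sum_j v 0 j *: row_mx (0 : 'rV[R]_n) 'e_j.
Proof.
rewrite {1}(row_sum_delta v); elim/big_rec2: _ => [|j u1 u2 _ <-]; first by rewrite row_mx0.
by rewrite scale_row_mx scaler0 add_row_mx addr0.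
Qed.

Lemma hessian_row_mx0_ge0_near n m (G : 'rV[R]_(n + m) -> R)
    (U : set 'rV[R]_(n + m)) y0 :
  open U -> Ck_on 2 U G -> U (row_mx 0 y0) ->
  (forall v : 'rV[R]_m, v != 0 ->
     0 < 'D_v (fun y => 'D_v (fun y' => G (row_mx 0 y')) y) y0) ->
  \forall z \near row_mx 0 y0,
    forall v : 'rV[R]_m, 0 <= 'D_(row_mx 0 v) ('D_(row_mx 0 v) G) z.
Proof.
move=> oU G2 Uz0 Gpos.
pose H i j z := 'D_(row_mx (0 : 'rV[R]_n) 'e_i) ('D_(row_mx (0 : 'rV[R]_n) 'e_j) G) z.
have HE z v : U z -> 'D_(row_mx 0 v) ('D_(row_mx 0 v) G) z = qform (fun i j => H i j z) v.
  by move=> Uz; rewrite row_mx0_sum_delta; exact: derive2_sum_dir oU G2 Uz.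
have H_ge0 : \forall z \near row_mx 0 y0, forall v, 0 <= qform (fun i j => H i j z) v.
  apply: qform_ge0_near => [i j|v v0].
    exact: Ck_on_continuous (Ck_on_derive _ (Ck_on_derive _ G2)) Uz0.
  rewrite -HE // derive_row_mx0.
  rewrite (_ : (fun y => _) = (fun y => 'D_v (fun y' => G (row_mx 0 y')) y)).
    exact: Gpos.
  by apply: funext => y; rewrite derive_row_mx0.
near=> z; have Uz : U z by near: z; exact: open_nbhs_nbhs.
have H_ge0_z : forall v, 0 <= qform (fun i j => H i j z) v by near: z; exact: H_ge0.
by move=> v; rewrite HE.
Unshelve. all: end_near. Qed.

Lemma local_min_row_mx n m (G : 'rV[R]_(n + m) -> R) (U : set 'rV[R]_(n + m))
    y0 :
  open U -> Ck_on 2 U G -> U (row_mx 0 y0) ->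
  (forall v : 'rV[R]_m, v != 0 ->
     0 < 'D_v (fun y => 'D_v (fun y' => G (row_mx 0 y')) y) y0) ->
  exists2 r : R, 0 < r & forall p y, `|p| < r -> `|y0 - y| < r ->
    (forall v, 'D_v (fun y' => G (row_mx p y')) y0 = 0) ->
    G (row_mx p y0) <= G (row_mx p y).
Proof.
move=> oU G2 Uz0 Gpos.
have near_z0 : \forall z \near row_mx 0 y0,
    U z /\ forall v : 'rV[R]_m, 0 <= 'D_(row_mx 0 v) ('D_(row_mx 0 v) G) z.
  near=> z; split; near: z; first exact: open_nbhs_nbhs.
  exact: hessian_row_mx0_ge0_near oU G2 Uz0 Gpos.
have [r r0 r_ball] := (nbhs_ballP _ _).1 near_z0.
exists r => // p y pr yr crit; pose v := y - y0.
have segment_ball t : 0 <= t <= 1 ->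
    ball (row_mx 0 y0) r (row_mx p y0 + t *: row_mx 0 v).
  move=> /andP[t0 t1]; rewrite -ball_normE /ball_ /= scale_row_mx scaler0 add_row_mx.
  rewrite addr0 opp_row_mx add_row_mx add0r norm_row_mx_lt ?normrN // opprD addNKr.
  by rewrite normrN normrZ ger0_norm // (le_lt_trans _ yr) // /v distrC ler_piMl.
have := le_critical_segment (G := G) (a := row_mx p y0) (v := row_mx 0 v).
rewrite add_row_mx addr0 /v subrKC; apply => [t t01|t t01|t t01|].
- exact: Ck_on_derivable G2 (r_ball _ (segment_ball t t01)).1.
- exact: Ck_on_derivable (Ck_on_derive _ G2) (r_ball _ (segment_ball t t01)).1.
- exact: (r_ball _ (segment_ball t t01)).2.
- by rewrite derive_row_mx0.
Unshelve. all: end_near. Qed.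

End local_minimum.

Section perturbed_minimum.
Variable R : realType.

Lemma open_setI_preimage (T U : topologicalType) (D : set T) (g : T -> U) (B : set U) :
  open D -> (forall x, D x -> {for x, continuous g}) -> open B ->
  open (D `&` g @^-1` B).
Proof.
move=> oD gc oB; rewrite openE => x [Dx Bgx] /=.
near=> y; split; near: y; first exact: open_nbhs_nbhs.
by apply: gc Dx _ _; exact: open_nbhs_nbhs.
Unshelve. all: end_near. Qed.

Lemma smooth_param_continuous (M : topologicalType) n m (A : set (chart R M m))
    (f : 'rV[R]_n -> M -> R) :
  (forall c, A c -> is_chart c) -> (forall x, exists c, A c /\ ch_dom c x) ->
  smooth_param A f ->
  forall x p, {for (x, p), continuous (fun xq : M * 'rV[R]_n => f xq.2 xq.1)}.
Proof.
move=> Achart Acover sf x p; have [d [Ad dx]] := Acover x.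
have [[dom_open _] fK _ fun_cont _] := Achart d Ad.
have G_cont : {for row_mx p (ch_fun d x),
    continuous (fun z : 'rV[R]_(n + m) => f (lsubmx z) (ch_inv d (rsubmx z)))}.
  by apply: (sf d Ad 0%N); rewrite /= row_mxKr; exact: (fK x dx).1.
apply/cvgrPdist_lt => e e0.
have [rho rho0 rho_ball] := (nbhs_ballP _ _).1 ((cvgrPdist_lt _ _).1 G_cont e e0).
exists ([set x' | ch_dom d x' /\ `|ch_fun d x - ch_fun d x'| < rho], ball p rho) => /=.
  split; last exact: nbhsx_ballx.
  near=> x'; split; near: x'; first exact: open_nbhs_nbhs.
  exact: (cvgrPdist_lt _ _).1 (fun_cont x dx) _ rho0.
move=> [x' q] [/= [dx' x'_close] q_close].
have := rho_ball (row_mx q (ch_fun d x')).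
rewrite /= !row_mxKl !row_mxKr (fK x dx).2 (fK x' dx').2; apply.
rewrite -ball_normE /ball_ /= opp_row_mx add_row_mx norm_row_mx_lt //.
by rewrite -ball_normE in q_close.
Unshelve. all: end_near. Qed.

(* Each point of [C] has a product neighbourhood on which either [W] holds or
   the strict inequality persists; compactness makes the [p]-neighbourhood
   uniform. *)
Lemma strict_min_persists (T P : topologicalType) (F : P -> T -> R) (C W : set T) p0 x0 :
  compact C -> open W ->
  (forall x, {for (x, p0), continuous (fun xp : T * P => F xp.2 xp.1)}) ->
  (forall x, C x -> ~ W x -> F p0 x0 < F p0 x) ->
  \forall p \near p0, forall x, C x -> ~ W x -> F p x0 < F p x.
Proof.
move=> cC oW Fc Fmin.
suff : \forall p \near p0, forall x, C x -> W x \/ F p x0 < F p x.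
  by apply: filterS => p CWF x Cx nWx; case: (CWF x Cx).
apply: ((compact_near_coveringP C).1 cC _ (nbhs p0)
  (fun p x => W x \/ F p x0 < F p x) _) => x Cx.
have [Wx|nWx] := pselect (W x).
  exists (W, setT) => [|[x' p] [/= Wx' _]]; last by left.
  by split; [exact: open_nbhs_nbhs | exact: filterT].
pose d := (F p0 x - F p0 x0) / 2.
have d0 : 0 < d by rewrite divr_gt0 // subr_gt0 Fmin.
have [[A0 B0] [/= A0x0 B0p0] AB0] := (cvgrPdist_lt _ _).1 (Fc x0) _ d0.
have F_x0 p : B0 p -> `|F p0 x0 - F p x0| < d.
  by move=> B0p; exact: (AB0 (x0, p)) (conj (nbhs_singleton A0x0) B0p).
have B0_near : \forall x' \near x & p \near p0, B0 p.
  by exists (setT, B0) => [|[? ?] []//]; split => //; exact: filterT.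
apply: filterS2 ((cvgrPdist_lt _ _).1 (Fc x) _ d0) B0_near => -[x' p] /= F_x /F_x0 F_x0p.
by right; move: F_x F_x0p; rewrite /d !ltr_norml => /andP[? ?] /andP[? ?]; lra.
Qed.

Lemma chart_local_min (M : topologicalType) n m (A : set (chart R M m))
    (f : 'rV[R]_n -> M -> R) c x0 :
  A c -> is_chart c -> ch_dom c x0 -> smooth_param A f -> pos_def_hessian A (f 0) x0 ->
  exists2 r : R, 0 < r & forall p x, `|p| < r -> ch_dom c x ->
    `|ch_fun c x0 - ch_fun c x| < r -> critical_point A (f p) x0 -> f p x0 <= f p x.
Proof.
move=> Ac [[_ img_open] fK _ _ _] dx0 sf hess.
pose U := [set z : 'rV[R]_(n + m) | ch_img c (rsubmx z)].
pose G z := f (lsubmx z) (ch_inv c (rsubmx z)).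
have G_row_mx p : (fun y => G (row_mx p y)) = (fun y => f p (ch_inv c y)).
  by apply: funext => y; rewrite /G row_mxKl row_mxKr.
have oU : open U := open_comp (fun z _ => @continuous_rsubmx _ _ _ _ z) img_open.
have [||r r0 G_min] := local_min_row_mx (G := G) (y0 := ch_fun c x0) oU (sf c Ac 2%N).
- by rewrite /U /= row_mxKr; exact: (fK x0 dx0).1.
- by move=> v v0; rewrite G_row_mx; exact: hess.
exists r => // p x pr dx xr crit.
have := G_min p (ch_fun c x) pr xr.
rewrite /G !row_mxKl !row_mxKr (fK x0 dx0).2 (fK x dx).2; apply.
by move=> v; rewrite G_row_mx; exact: crit.
Qed.

End perturbed_minimum.

Theorem lemma2p12 (R : realType) (M : topologicalType) (m n : nat)
    (A : set (chart R M m)) (C : set M) (f : 'rV[R]_n -> M -> R) (x0 : M) :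
  smooth_manifold A ->
  compact C ->
  smooth_param A f ->
  C x0 ->
  (forall x, C x -> f 0 x0 <= f 0 x) ->
  (forall x, C x -> f 0 x = f 0 x0 -> x = x0) ->
  critical_point A (f 0) x0 ->
  pos_def_hessian A (f 0) x0 ->
  (exists2 zeta : R, 0 < zeta &
     forall p : 'rV[R]_n, `|p| < zeta -> critical_point A (f p) x0) ->
  exists2 eps : R, 0 < eps &
    forall p : 'rV[R]_n, `|p| < eps -> forall x, C x -> f p x0 <= f p x.
Proof.
move=> [_ _ Achart Acover _] cC sf _ gmin guniq _ hess [zeta zeta0 crit].
have [c [Ac dx0]] := Acover x0; have c_chart := Achart c Ac.
have [r r0 chart_min] := chart_local_min Ac c_chart dx0 sf hess.
pose W := ch_dom c `&` ch_fun c @^-1` ball (ch_fun c x0) r.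
have oW : open W.
  case: c_chart => -[dom_open _] _ _ fun_cont _.
  exact: open_setI_preimage (ball_open _ _).
have off_W x : C x -> ~ W x -> f 0 x0 < f 0 x.
  move=> Cx nWx; rewrite lt_neqAle gmin // andbT; apply/eqP => /esym/(guniq x Cx) xx0.
  by apply: nWx; rewrite xx0; split => //; exact: ballxx.
have [e e0 e_ball] := (nbhs_ballP _ _).1 (strict_min_persists cC oW
  (fun x => smooth_param_continuous (x := x) (p := 0) Achart Acover sf) off_W).
exists (Num.min e (Num.min r zeta)) => [|p]; first by rewrite !lt_min e0 r0 zeta0.
rewrite !lt_min => /and3P[pe pr pz] x Cx.
have [[dx xr]|nWx] := pselect (W x).
  by apply: chart_min => //; [rewrite -ball_normE in xr | exact: crit].
apply/ltW/(e_ball p _ x Cx nWx).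
by rewrite -ball_normE /ball_ /= sub0r normrN.
Qed.
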